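(* For all integers $1\le q\le k$, $g(k,q)\le u(k,q)$, where $g(k,q)$ is the smallest cardinality of a subset of $\{-1,+1\}^k$ intersecting every $(k-q)$-subcube, and $u(k,q)$ is the smallest cardinality of a set of uniqueness for $(\mathcal{B}^k_q)_+$.
   Context: Let $\mathcal{X}=\{-1,+1\}^k$. A $(k-q)$-subcube of $\mathcal{X}$ is a set obtained by fixing the values of exactly $q$ coordinates and letting the other $k-q$ coordinates range freely. For $L\subseteq\{1,\ldots,k\}$ let $w_L(x)=\prod_{j\in L}x_j$ (with $w_\emptyset\equiv 1$); $\mathcal{B}^k_q$ is the linear span of $\{w_L:|L|\le q\}$ and $(\mathcal{B}^k_q)_+=\{\varphi\in\mathcal{B}^k_q:\varphi\ge 0\}$. A set $U\subseteq\mathcal{X}$ is a set of uniqueness for $(\mathcal{B}^k_q)_+$ if the only $\varphi\in(\mathcal{B}^k_q)_+$ vanishing on $U$ is $\varphi\equiv 0$. *)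

From HB Require Import structures.
From mathcomp Require Import all_boot all_order all_algebra.
From mathcomp Require Import boolp reals.
Set Implicit Arguments. Unset Strict Implicit. Unset Printing Implicit Defensive.
Import Order.TTheory GRing.Theory Num.Theory.
Local Open Scope ring_scope.

(* The hypercube {-1,+1}^k: a point is x : 'I_k -> bool, with
   true encoding +1 and false encoding -1. *)
Definition cube (k : nat) := {ffun 'I_k -> bool}.

Definition sgn (R : realType) (b : bool) : R := if b then 1 else -1.

Definition walsh (R : realType) (k : nat) (L : {set 'I_k}) (x : cube k) : R :=
  \prod_(j in L) sgn R (x j).

Definition in_B (R : realType) (k q : nat) (phi : cube k -> R) : Prop :=
  exists c : {set 'I_k} -> R,
    (forall L : {set 'I_k}, (q < #|L|)%N -> c L = 0) /\
    forall x, phi x = \sum_(L : {set 'I_k}) c L * walsh R L x.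

Definition in_B_plus (R : realType) (k q : nat) (phi : cube k -> R) : Prop :=
  in_B q phi /\ forall x, 0 <= phi x.

Definition uniqueness_set (R : realType) (k q : nat) (U : {set cube k}) : Prop :=
  forall phi : cube k -> R, in_B_plus q phi ->
    (forall x, x \in U -> phi x = 0) -> forall x, phi x = 0.

Definition subcube (k : nat) (S : {set 'I_k}) (a : cube k) : {set cube k} :=
  [set x : cube k | [forall j in S, x j == a j]].

Definition hits_all_subcubes (k q : nat) (H : {set cube k}) : Prop :=
  forall (S : {set 'I_k}) (a : cube k), #|S| = q ->
    exists2 x, x \in H & x \in subcube S a.

(* g(k,q): smallest cardinality of a set meeting every (k-q)-subcube.
   (The whole cube is such a set, so the default #|cube k| is harmless.) *)
Definition g_num (k q : nat) : nat :=
  \big[minn/#|[set: cube k]|]_(H : {set cube k} | `[< hits_all_subcubes q H >]) #|H|.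

(* u(k,q): smallest cardinality of a set of uniqueness for (B^k_q)_+.
   (The whole cube is such a set.) *)
Definition u_num (R : realType) (k q : nat) : nat :=
  \big[minn/#|[set: cube k]|]_(U : {set cube k} | `[< uniqueness_set R q U >]) #|U|.

From mathcomp Require Import all_boot all_order all_algebra.
From mathcomp Require Import boolp reals.
Set Implicit Arguments. Unset Strict Implicit. Unset Printing Implicit Defensive.
Import Order.TTheory GRing.Theory Num.Theory.
Local Open Scope ring_scope.

(* A set of uniqueness must meet every subcube of codimension q: the indicator
   of such a subcube is the product of the q affine factors (1 + a_j x_j)/2,
   hence a nonnegative element of B^k_q which vanishes off the subcube. So
   every set of uniqueness is admissible in the minimum defining g(k,q). *)

Section SubcubeIndicator.
Variables (R : realType) (k q : nat).

Lemma sgnM (b c : bool) : sgn R b * sgn R c = sgn R (b == c).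
Proof. by case: b; case: c; rewrite /sgn ?mulr1 ?mul1r ?mulrNN ?mulr1. Qed.

Lemma half_one_add_sgn (b : bool) : (1 + sgn R b) / 2 = b%:R.
Proof. by case: b; rewrite /sgn ?subrr ?mul0r // -[1 + 1]/2%:R divff // pnatr_eq0. Qed.

Lemma in_B_prod_affine (S : {set 'I_k}) (alpha beta : 'I_k -> R) :
    (#|S| <= q)%N -> (forall i, i \notin S -> alpha i = 0) ->
  in_B q (fun x : cube k => \prod_i (alpha i * sgn R (x i) + beta i)).
Proof.
move=> leSq alpha_out.
exists (fun J : {set 'I_k} => \prod_i (if i \in J then alpha i else beta i)); split.
  move=> J ltqJ; have /subsetPn [i iJ iS] : ~~ (J \subset S).
    by apply: contraTN ltqJ => /subset_leq_card leJS; rewrite -leqNgt (leq_trans leJS).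
  by rewrite (bigD1 i) //= iJ alpha_out // mul0r.
move=> x; rewrite bigA_distr; apply: eq_bigr => J _.
rewrite /walsh [X in _ * X]big_mkcond -big_split /=.
by apply: eq_bigr => i _; case: (i \in J); rewrite ?mulr1.
Qed.

Definition subcube_indicator (S : {set 'I_k}) (a : cube k) (x : cube k) : R :=
  (x \in subcube S a)%:R.

Lemma subcube_indicatorE (S : {set 'I_k}) (a x : cube k) :
  subcube_indicator S a x =
  \prod_i ((if i \in S then sgn R (a i) / 2 else 0) * sgn R (x i)
           + (if i \in S then 1 / 2 else 1)).
Proof.
have factorE i : (if i \in S then sgn R (a i) / 2 else 0) * sgn R (x i)
                 + (if i \in S then 1 / 2 else 1) = if i \in S then (a i == x i)%:R else 1.
  case: (i \in S); last by rewrite mul0r add0r.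
  by rewrite mulrAC -mulrDl addrC sgnM half_one_add_sgn.
rewrite /subcube_indicator inE; under eq_bigr => i _ do rewrite factorE.
case: (boolP [forall _ in _, _]) => [/forall_inP agree | /forall_inPn [i iS /negbTE disagree]].
  by apply/esym/big1 => i _; case: ifP => // /agree /eqP->; rewrite eqxx.
by rewrite (bigD1 i) //= iS eq_sym disagree mul0r.
Qed.

Lemma subcube_indicator_in_B_plus (S : {set 'I_k}) (a : cube k) :
  (#|S| <= q)%N -> in_B_plus q (subcube_indicator S a).
Proof.
move=> leSq; split=> [|x]; last exact: ler0n.
have := in_B_prod_affine (alpha := fun i => if i \in S then sgn R (a i) / 2 else 0)
  (fun i => if i \in S then 1 / 2 else 1) leSq.
case=> [i /negbTE -> //| c [c_vanish expand]].
by exists c; split=> // x; rewrite subcube_indicatorE expand.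
Qed.

Lemma uniqueness_set_hits_all_subcubes (U : {set cube k}) :
  uniqueness_set R q U -> hits_all_subcubes q U.
Proof.
move=> uniqU S a cardS.
have [/exists_inP // | /exists_inPn missU] := boolP [exists x in U, x \in subcube S a].
have vanishU x : x \in U -> subcube_indicator S a x = 0.
  by move/missU/negbTE; rewrite /subcube_indicator => ->.
have := uniqU _ (subcube_indicator_in_B_plus a (eq_leq cardS)) vanishU a.
rewrite /subcube_indicator inE => /eqP; rewrite pnatr_eq0 eqb0 => /negP[].
exact/forall_inP.
Qed.

End SubcubeIndicator.

Theorem corollary2 (R : realType) (k q : nat) :
  (1 <= q)%N -> (q <= k)%N -> (g_num k q <= u_num R k q)%N.
Proof.
move=> _ _; apply: (@sub_bigmin _ nat) => U /asboolP uniqU.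
exact/asboolP/(uniqueness_set_hits_all_subcubes uniqU).
Qed.
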